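(* Let $F=(f_t)_{t\in\mathbb{R}}$ be a continuous flow on a compact metric space $X$, and suppose the $F$-invariant Borel probability measure $\mu$ is almost expansive at scale $\varepsilon$. Let $\gamma\in(0,\varepsilon/2]$, and for each $t>0$ let $\mathcal{A}_t$ be an adapted partition for a $(t,\gamma)$-separated set of maximal cardinality. Let $Q\subset X$ be a measurable $F$-invariant set. Then for every $\alpha>0$ there exists $t_0$ such that for every $t\ge t_0$ there is a subcollection $U\subset\mathcal{A}_t$ with $\mu(U\triangle Q)<\alpha$ (where $U$ also denotes the union of its elements).
   Context: $d_t(x,y)=\sup_{s\in[0,t]}d(f_sx,f_sy)$, $B_t(x,r)=\{y:d_t(x,y)<r\}$, $\overline B_t(x,r)=\{y:d_t(x,y)\le r\}$; $E$ is $(t,\gamma)$-separated if $d_t(x,y)>\gamma$ for distinct $x,y\in E$. If $E_t$ is a $(t,\gamma)$-separated set of maximal cardinality, a partition $\mathcal{A}_t$ of $X$ is adapted to $E_t$ if for every $w\in\mathcal{A}_t$ there is $x\in E_t$ with $B_t(x,\gamma/2)\subset w\subset\overline B_t(x,\gamma)$. $\Gamma_\varepsilon(x)=\{y:d(f_sx,f_sy)\le\varepsilon\ \forall s\in\mathbb{R}\}$, $\mathrm{NE}(\varepsilon)=\{x:\Gamma_\varepsilon(x)\not\subset\{f_sx:s\in\mathbb{R}\}\}$; $\mu$ is almost expansive at scale $\varepsilon$ if $\mu(\mathrm{NE}(\varepsilon))=0$. *)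

From HB Require Import structures.
From mathcomp Require Import all_boot all_order all_algebra.
From mathcomp Require Import all_classical all_reals all_analysis.
Set Implicit Arguments. Unset Strict Implicit. Unset Printing Implicit Defensive.
Import Order.TTheory GRing.Theory Num.Theory.
Local Open Scope classical_set_scope.
Local Open Scope ring_scope.

Section Defs.
Context {R : realType} {X : Type}.
Variable (dist : X -> X -> R).

Definition is_metric : Prop :=
  [/\ forall x y, 0 <= dist x y,
      forall x y, dist x y = 0 <-> x = y,
      forall x y, dist x y = dist y x &
      forall x y z, dist x z <= dist x y + dist y z].

Definition dopen (U : set X) : Prop :=
  forall x, U x -> exists2 r : R, 0 < r & [set y | dist x y < r] `<=` U.

Definition dcompact : Prop :=
  forall (I : Type) (U : I -> set X), (forall i, dopen (U i)) ->
    setT `<=` \bigcup_(i in setT) U i ->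
    exists2 J : set I, finite_set J & setT `<=` \bigcup_(i in J) U i.

Definition is_continuous_flow (f : R -> X -> X) : Prop :=
  [/\ forall x, f 0 x = x,
      forall s t x, f (s + t) x = f s (f t x) &
      forall t x (e : R), 0 < e -> exists2 del : R, 0 < del &
        forall s y, `|s - t| < del -> dist x y < del -> dist (f t x) (f s y) < e].

Definition bowen_dist (f : R -> X -> X) (t : R) (x y : X) : R :=
  sup [set dist (f s x) (f s y) | s in `[0, t]].

Definition bowen_ball (f : R -> X -> X) (t : R) (x : X) (r : R) : set X :=
  [set y | bowen_dist f t x y < r].

Definition bowen_cball (f : R -> X -> X) (t : R) (x : X) (r : R) : set X :=
  [set y | bowen_dist f t x y <= r].

Definition separated (f : R -> X -> X) (t gamma : R) (E : set X) : Prop :=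
  forall x y, E x -> E y -> x <> y -> gamma < bowen_dist f t x y.

Definition max_separated (f : R -> X -> X) (t gamma : R) (E : set X) : Prop :=
  separated f t gamma E /\
  forall E' : set X, separated f t gamma E' -> (E' #<= E)%card.

Definition is_partition (P : set (set X)) : Prop :=
  [/\ forall w, P w -> w !=set0,
      forall w w', P w -> P w' -> w `&` w' !=set0 -> w = w' &
      \bigcup_(w in P) w = setT].

Definition adapted (f : R -> X -> X) (t gamma : R) (E : set X) (P : set (set X)) : Prop :=
  is_partition P /\
  forall w, P w -> exists2 x, E x &
    bowen_ball f t x (gamma / 2) `<=` w /\ w `<=` bowen_cball f t x gamma.

Definition Gamma_set (f : R -> X -> X) (eps : R) (x : X) : set X :=
  [set y | forall s : R, dist (f s x) (f s y) <= eps].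

Definition orbit_set (f : R -> X -> X) (x : X) : set X :=
  [set f s x | s in [set: R]].

Definition NE (f : R -> X -> X) (eps : R) : set X :=
  [set x | ~ (Gamma_set f eps x `<=` orbit_set f x)].

End Defs.

From Pilot Require Import Defs.
From HB Require Import structures.
From mathcomp Require Import all_boot all_order all_algebra.
From mathcomp Require Import all_classical all_reals all_analysis.
From mathcomp Require Import lra.
Import Order.TTheory GRing.Theory Num.Theory.
Local Open Scope classical_set_scope.
Local Open Scope ring_scope.

(* Approximate [~` Q] from inside by a closed set [C]: Borel probability
   measures on a metric space are inner regular for closed sets.  Call [x]
   shadowed up to time [T] when a point of [C] stays [eps]-close to the orbit
   of [x] during [[-T, T]].  By compactness a point of [Q] shadowed up to every
   time has a point of [C] in its [Gamma_set]; as [Q] is invariant that point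
   is off its orbit, so such points are negligible and the points of [Q]
   shadowed up to some time [n] have small measure.  For [t >= 2 n + 1] keep
   the cells of [A t] meeting [f (- t / 2)] of the unshadowed points.  Two
   points of a cell stay [2 gamma <= eps] apart during [[0, t]], so the union
   of these cells, pulled back by [f (- t / 2)], misses [C] and contains [Q]
   minus its shadowed points; invariance of [mu] and [Q] concludes. *)

Lemma finite_set_nat_ub {J : set nat} :
  finite_set J -> exists N, forall n, J n -> (n <= N)%N.
Proof.
move=> fJ; exists (\max_(n <- finmap.enum_fset (fset_set J)) n) => n Jn.
by apply: (@leq_bigmax_seq _ _ xpredT id) => //; rewrite in_fset_set // inE.
Qed.

Lemma invr_natS_lt {R : realType} {e : R} {N : nat} : 0 < e ->
  (Num.Def.archi_bound e^-1 <= N)%N -> N.+1%:R^-1 < e.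
Proof.
move=> e_gt0 eN; rewrite -[ltRHS]invrK ltf_pV2 ?posrE ?invr_gt0 ?ltr0Sn //.
apply: (lt_le_trans (archi_boundP _)); first by rewrite invr_ge0 ltW.
by rewrite ler_nat; apply: leq_trans eN _.
Qed.

Definition dball {R : realType} {X : Type} (dist : X -> X -> R) (x : X) (r : R) : set X :=
  [set y | dist x y < r].

Definition dclosed {R : realType} {X : Type} (dist : X -> X -> R) (C : set X) : Prop :=
  dopen dist (~` C).

Section MetricSpace.
Context {R : realType} {X : Type} {dist : X -> X -> R}.

Lemma dclosed0 : dclosed dist set0.
Proof. by rewrite /dclosed setC0 => x _; exists 1. Qed.

Lemma dclosedT : dclosed dist setT.
Proof. by rewrite /dclosed setCT. Qed.

Lemma dclosedU C1 C2 : dclosed dist C1 -> dclosed dist C2 -> dclosed dist (C1 `|` C2).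
Proof.
move=> C1_closed C2_closed x; rewrite setCU => -[x1 x2].
have [r1 r1_gt0 sub1] := C1_closed x x1; have [r2 r2_gt0 sub2] := C2_closed x x2.
exists (Num.min r1 r2); first by rewrite lt_min r1_gt0 r2_gt0.
by move=> y /=; rewrite lt_min => /andP[y1 y2]; split; [exact: sub1 | exact: sub2].
Qed.

Lemma dclosed_bigcap (C : nat -> set X) : (forall n, dclosed dist (C n)) ->
  dclosed dist (\bigcap_n C n).
Proof.
move=> C_closed x; rewrite setC_bigcap => -[n _ xn].
by have [r r_gt0 sub] := C_closed n x xn; exists r => // y /sub; exists n.
Qed.

Hypothesis dist_metric : is_metric dist.

Lemma dist_ge0 x y : 0 <= dist x y.
Proof. by case: dist_metric. Qed.

Lemma distxx x : dist x x = 0.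
Proof. by case: dist_metric => _ dist0 _ _; apply/dist0. Qed.

Lemma distC x y : dist x y = dist y x.
Proof. by case: dist_metric. Qed.

Lemma dist_triangle x y z : dist x z <= dist x y + dist y z.
Proof. by case: dist_metric. Qed.

Lemma dopen_dball x r : dopen dist (dball dist x r).
Proof.
move=> y /= xy; exists (r - dist x y); first by rewrite subr_gt0.
by move=> z /= yz; apply: (le_lt_trans (dist_triangle x y z)); rewrite -ltrBrDl.
Qed.

Hypothesis dist_compact : dcompact dist.

Lemma dist_bounded (x0 : X) : exists B, forall x y, dist x y <= B.
Proof.
have cover : setT `<=` \bigcup_(n in [set: nat]) dball dist x0 n%:R.
  move=> y _; exists (Num.Def.archi_bound (dist x0 y)) => //.
  exact: archi_boundP (dist_ge0 _ _).
have [J J_fin J_cover] := dist_compact _ _ (fun n : nat => dopen_dball x0 n%:R) cover.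
have [N JN] := finite_set_nat_ub J_fin.
exists (N%:R + N%:R) => x y.
have [i Ji xi] := J_cover x Logic.I; have [j Jj yj] := J_cover y Logic.I.
apply: (le_trans (dist_triangle x x0 y)); rewrite distC.
by apply: lerD; apply/ltW; [apply: lt_le_trans xi _ | apply: lt_le_trans yj _];
  rewrite ler_nat JN.
Qed.

Lemma dclosed_cluster (K : set X) (xs : nat -> X) :
  dclosed dist K -> (forall m, K (xs m)) ->
  exists2 y, K y & forall r, 0 < r -> forall N, exists2 m, (N <= m)%N & dist y (xs m) < r.
Proof.
move=> K_closed Kxs; apply: contrapT => no_cluster.
have isolated y : exists p : R * nat, 0 < p.1 /\
    forall m, (p.2 <= m)%N -> ~ dist y (xs m) < p.1.
  have [Ky|nKy] := pselect (K y).
    have /existsNP[r /not_implyP[r_gt0 /existsNP[N far]]] :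
        ~ (forall r, 0 < r -> forall N, exists2 m, (N <= m)%N & dist y (xs m) < r).
      by move=> close; apply: no_cluster; exists y.
    by exists (r, N); split => // m Nm ym; apply: far; exists m.
  have [r r_gt0 ball_out] := K_closed y nKy.
  by exists (r, 0%N); split => // m _ /ball_out; apply; apply: Kxs.
have /choice[p hp] := isolated.
have cover : setT `<=` \bigcup_(y in [set: X]) dball dist y (p y).1.
  by move=> y _; exists y => //; rewrite /dball /= distxx; case: (hp y).
have [J J_fin J_cover] := dist_compact _ _ (fun y => dopen_dball y (p y).1) cover.
have [N JN] := finite_set_nat_ub (finite_image (fun y => (p y).2) J_fin).
have [y Jy yN] := J_cover (xs N) Logic.I.
by case: (hp y) => _; apply; [apply: JN; exists y | exact: yN].
Qed.

End MetricSpace.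

Section Flow.
Context {R : realType} {X : Type} {dist : X -> X -> R} {f : R -> X -> X}.
Hypothesis dist_metric : is_metric dist.
Hypothesis flow : is_continuous_flow dist f.

Lemma flow_cont r x {e : R} : 0 < e -> exists2 del, 0 < del &
  forall y, dist x y < del -> dist (f r x) (f r y) < e.
Proof.
case: flow => _ _ cont e_gt0; have [del del_gt0 near] := cont r x e e_gt0.
by exists del => // y xy; apply: near => //; rewrite subrr normr0.
Qed.

Lemma dopen_flow_preimage r O : dopen dist O -> dopen dist (f r @^-1` O).
Proof.
move=> O_open x /= Ox; have [e e_gt0 ball_O] := O_open _ Ox.
have [del del_gt0 near] := flow_cont r x e_gt0.
by exists del => // y /near /ball_O.
Qed.

Lemma flow_cont_near z s0 {c : R} : 0 < c -> exists2 del, 0 < del &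
  forall s y, `|s - s0| < del -> dist z y < del -> dist (f s z) (f s y) < c.
Proof.
move=> c_gt0; case: flow => _ _ cont.
have [del del_gt0 near] := cont s0 z (c / 2) (divr_gt0 c_gt0 (ltr0Sn _ 1)).
exists del => // s y s0s zy.
apply: (le_lt_trans (dist_triangle dist_metric _ (f s0 z) _)).
rewrite (splitr c); apply: ltrD; last exact: near.
by rewrite (distC dist_metric); apply: near => //; rewrite (distxx dist_metric).
Qed.

(* Continuity induction on the supremum [b] of the times up to which one [del]
   works: continuity of the flow at [(b, z)] pushes such a time beyond [b]. *)
Lemma flow_cont_segment z {t c : R} : 0 <= t -> 0 < c -> exists2 del, 0 < del &
  forall y, dist z y < del -> forall s, 0 <= s <= t -> dist (f s z) (f s y) < c.
Proof.
move=> t_ge0 c_gt0.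
pose P a := exists2 del, 0 < del &
  forall y, dist z y < del -> forall s, 0 <= s <= a -> dist (f s z) (f s y) < c.
pose S := [set a | 0 <= a <= t /\ P a].
have S0 : S 0.
  split; first by rewrite lexx t_ge0.
  have [del del_gt0 near] := flow_cont_near z 0 c_gt0; exists del => // y zy s.
  move=> s0; have -> : s = 0 by apply/le_anti; rewrite andbC.
  by apply: near; rewrite // subrr normr0.
have S_sup : has_sup S by split; [exists 0 | exists t => a [/andP[_ ->]]].
set b := sup S.
have b_ge0 : 0 <= b by apply: ub_le_sup => //; case: S_sup.
have [del0 del0_gt0 near] := flow_cont_near z b c_gt0.
have [a [/andP[a_ge0 a_le] [dela dela_gt0 Pa]] ba] := sup_adherent del0_gt0 S_sup.
pose a' := Num.min t (b + del0 / 2).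
have Pa' : P a'.
  exists (Num.min dela del0); first by rewrite lt_min dela_gt0 del0_gt0.
  move=> y; rewrite lt_min => /andP[y1 y2] s /andP[s_ge0 sa'].
  have [sa|as_] := leP s a; first by apply: Pa => //; rewrite s_ge0 sa.
  apply: near => //.
  have sb : s <= b + del0 / 2 by apply: (le_trans sa'); rewrite ge_min lexx orbT.
  rewrite ltr_norml; apply/andP; split; rewrite -/b in ba; lra.
have [tb|bt] := leP t (b + del0 / 2).
  by have -> : t = a' by rewrite /a'; apply/esym/min_idPl.
have a'S : S a'.
  split => //; rewrite /a' ge_min lexx /= andbT.
  by rewrite le_min t_ge0 /= addr_ge0 // divr_ge0 // ltW.
have : a' <= b by apply: ub_le_sup => //; case: S_sup.
have -> : a' = b + del0 / 2 by rewrite /a'; apply/min_idPr/ltW.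
lra.
Qed.

Hypothesis dist_compact : dcompact dist.

Lemma dist_le_bowen_dist t x y s : 0 <= s <= t ->
  dist (f s x) (f s y) <= bowen_dist dist f t x y.
Proof.
move=> st; have [B distB] := dist_bounded dist_metric dist_compact x.
by apply: ub_le_sup; [exists B => _ [u _ <-] | exists s; rewrite //= in_itv].
Qed.

Lemma bowen_dist_le t x y g : 0 <= t ->
  (forall s, 0 <= s <= t -> dist (f s x) (f s y) <= g) ->
  bowen_dist dist f t x y <= g.
Proof.
move=> t_ge0 le_g; apply: ge_sup; first by exists (dist (f 0 x) (f 0 y)), 0;
  rewrite //= in_itv /= lexx t_ge0.
by move=> _ [u ut <-]; apply: le_g; move: ut; rewrite /= in_itv.
Qed.

Lemma separated_finite_set t g E : 0 <= t -> 0 < g -> Defs.separated dist f t g E ->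
  finite_set E.
Proof.
move=> t_ge0 g_gt0 E_sep.
have /choice[del hdel] z : exists del, 0 < del /\ forall y, dist z y < del ->
    forall s, 0 <= s <= t -> dist (f s z) (f s y) < g / 2.
  have [del ? ?] := flow_cont_segment z t_ge0 (divr_gt0 g_gt0 (ltr0Sn _ 1)).
  by exists del.
have cover : setT `<=` \bigcup_(z in [set: X]) dball dist z (del z).
  by move=> y _; exists y => //; rewrite /dball /= (distxx dist_metric); case: (hdel y).
have [J J_fin J_cover] :=
  dist_compact _ _ (fun z => dopen_dball dist_metric z (del z)) cover.
have /choice[c hc] x : exists c, J c /\ dist c x < del c.
  by have [c Jc cx] := J_cover x Logic.I; exists c.
have c_inj : {in E &, injective c}.
  move=> x y /[!inE] Ex Ey cxy; apply: contrapT => xy.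
  have := E_sep x y Ex Ey xy; apply/negP; rewrite -leNgt.
  apply: bowen_dist_le => // s st.
  have [_ hx] := hc x; have [_ hy] := hc y; rewrite cxy in hx.
  apply: (le_trans (dist_triangle dist_metric _ (f s (c y)) _)).
  rewrite (splitr g) (distC dist_metric); apply: lerD; apply/ltW.
    by case: (hdel (c y)) => _; apply.
  by case: (hdel (c y)) => _; apply.
rewrite -(eq_finite_set (inj_card_eq c_inj)); apply: sub_finite_set J_fin.
by move=> _ [x _ <-]; case: (hc x).
Qed.

End Flow.

Section AdaptedPartition.
Context {R : realType} {X : Type} {dist : X -> X -> R} {f : R -> X -> X}.
Hypotheses (dist_metric : is_metric dist) (dist_compact : dcompact dist).
Hypothesis flow : is_continuous_flow dist f.
Context {t gamma : R} {E : set X} {P : set (set X)}.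
Hypothesis P_adapted : adapted dist f t gamma E P.

Lemma adapted_cell_close {w x y s} : P w -> w x -> w y -> 0 <= s <= t ->
  dist (f s x) (f s y) <= gamma + gamma.
Proof.
move=> Pw wx wy st; have [_ /(_ w Pw)[c _ [_ w_ball]]] := P_adapted.
apply: (le_trans (dist_triangle dist_metric _ (f s c) _)).
rewrite (distC dist_metric (f s x)).
by apply: lerD;
  apply: le_trans (dist_le_bowen_dist dist_metric dist_compact _ _ _ _ st) _; apply: w_ball.
Qed.

Lemma adapted_finite : 0 <= t -> 0 < gamma -> Defs.separated dist f t gamma E ->
  finite_set P.
Proof.
move=> t_ge0 gamma_gt0 E_sep; have [[_ P_disj P_cover] P_centre] := P_adapted.
have /choice[cell hcell] c : exists w, E c -> P w /\ w c.
  have : (\bigcup_(w in P) w) c by rewrite P_cover.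
  by case=> w Pw wc; exists w.
apply: sub_finite_set (finite_image cell
  (separated_finite_set dist_metric flow dist_compact _ _ _ t_ge0 gamma_gt0 E_sep)).
move=> w Pw; have [c Ec [c_ball _]] := P_centre w Pw.
have [Pc cc] := hcell c Ec; have wc : w c.
  apply: c_ball; apply: le_lt_trans (divr_gt0 gamma_gt0 (ltr0Sn _ 1)).
  by apply: bowen_dist_le => // s _; rewrite (distxx dist_metric).
by exists c => //; apply: P_disj => //; exists c.
Qed.

End AdaptedPartition.

Definition shadowed {R : realType} {X : Type} (dist : X -> X -> R) (f : R -> X -> X)
    (eps : R) (C : set X) (T : R) : set X :=
  [set x | exists2 y, C y & forall r, `|r| <= T -> dist (f r x) (f r y) <= eps].

Definition cells_meeting {X : Type} (P : set (set X)) (B : set X) : set (set X) :=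
  [set w | P w /\ w `&` B !=set0].

Lemma sub_bigcup_cells_meeting {X : Type} (P : set (set X)) (B : set X) :
  \bigcup_(w in P) w = setT -> B `<=` \bigcup_(w in cells_meeting P B) w.
Proof.
move=> P_cover x Bx; have : (\bigcup_(w in P) w) x by rewrite P_cover.
by case=> w Pw wx; exists w => //; split => //; exists x.
Qed.

Section Shadowing.
Context {R : realType} {X : Type} {dist : X -> X -> R} {f : R -> X -> X}.
Hypotheses (dist_metric : is_metric dist) (dist_compact : dcompact dist).
Hypothesis flow : is_continuous_flow dist f.
Variable eps : R.

Lemma shadowed_le C T1 T2 : T1 <= T2 ->
  shadowed dist f eps C T2 `<=` shadowed dist f eps C T1.
Proof.
by move=> T12 x [y Cy shadow]; exists y => // r rT1; apply: shadow; apply: le_trans T12.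
Qed.

Lemma shadowing_limit (C : set X) (x : X) (xs ys : nat -> X) (S : nat -> set R) :
  dclosed dist C -> (forall m, C (ys m)) -> (forall m, dist x (xs m) < m.+1%:R^-1) ->
  (forall m r, S m r -> dist (f r (xs m)) (f r (ys m)) <= eps) ->
  (forall m m', (m <= m')%N -> S m `<=` S m') ->
  exists2 y, C y & forall m r, S m r -> dist (f r x) (f r y) <= eps.
Proof.
move=> C_closed Cys xs_x ys_shadow S_mono.
have [y Cy y_cluster] := dclosed_cluster dist_metric dist_compact _ _ C_closed Cys.
exists y => // m0 r Sr; apply/ler_addgt0Pr => eta eta_gt0.
have eta2_gt0 : 0 < eta / 2 by rewrite divr_gt0.
have [del1 del1_gt0 near_x] := flow_cont flow r x eta2_gt0.
have [del2 del2_gt0 near_y] := flow_cont flow r y eta2_gt0.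
have [m Nm ym] := y_cluster _ del2_gt0 (maxn m0 (Num.Def.archi_bound del1^-1)).
have x_xm : dist x (xs m) < del1.
  apply: lt_trans (xs_x m) (invr_natS_lt del1_gt0 _).
  by apply: leq_trans Nm; rewrite leq_maxr.
have Smr : S m r by apply: S_mono Sr; apply: leq_trans Nm; rewrite leq_maxl.
have := near_x _ x_xm; have := near_y _ ym; have := ys_shadow m r Smr.
have := dist_triangle dist_metric (f r x) (f r (xs m)) (f r y).
have := dist_triangle dist_metric (f r (xs m)) (f r (ys m)) (f r y).
rewrite (distC dist_metric (f r (ys m))); lra.
Qed.

Lemma dclosed_shadowed C T : dclosed dist C -> dclosed dist (shadowed dist f eps C T).
Proof.
move=> C_closed x not_shadowed; apply: contrapT => no_ball.
have /choice[xs hxs] m : exists z, dist x z < m.+1%:R^-1 /\ shadowed dist f eps C T z.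
  apply: contrapT => none; apply: no_ball; exists m.+1%:R^-1; first by rewrite invr_gt0.
  by move=> z xz Hz; apply: none; exists z.
have /choice[ys hys] m : exists y,
    C y /\ forall r, `|r| <= T -> dist (f r (xs m)) (f r y) <= eps.
  by have [_ [y Cy ?]] := hxs m; exists y.
have [y Cy y_shadow] := shadowing_limit _ _ _ _ (fun=> [set r | `|r| <= T]) C_closed
  (fun m => proj1 (hys m)) (fun m => proj1 (hxs m)) (fun m => proj2 (hys m))
  (fun _ _ _ _ => id).
by apply: not_shadowed; exists y => // r rT; apply: (y_shadow 0%N).
Qed.

Lemma bigcap_shadowed_sub_NE (Q C : set X) : (forall s, f s @^-1` Q = Q) ->
  dclosed dist C -> C `<=` ~` Q ->
  \bigcap_n (Q `&` shadowed dist f eps C n%:R) `<=` NE dist f eps.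
Proof.
move=> Q_inv C_closed CQ x x_shadowed Gamma_orbit.
have [Qx _] := x_shadowed 0%N Logic.I.
have /choice[ys hys] m : exists y,
    C y /\ forall r, `|r| <= m%:R -> dist (f r x) (f r y) <= eps.
  by have [_ [y Cy ?]] := x_shadowed m Logic.I; exists y.
have xx m : dist x x < m.+1%:R^-1 by rewrite (distxx dist_metric) invr_gt0.
have S_mono m m' :
    (m <= m')%N -> [set r : R | `|r| <= m%:R] `<=` [set r | `|r| <= m'%:R].
  by move=> mm' r /= /le_trans; apply; rewrite ler_nat.
have [y Cy y_shadow] := shadowing_limit _ _ _ _ _ C_closed (fun m => proj1 (hys m)) xx
  (fun m => proj2 (hys m)) S_mono.
have [s _ sxy] :=
  Gamma_orbit y (fun r => y_shadow _ r (ltW (archi_boundP (normr_ge0 r)))).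
by apply: (CQ y Cy); rewrite -sxy; have : (f s @^-1` Q) x by rewrite Q_inv.
Qed.

Lemma cells_meeting_unshadowed_sub {t gamma E P C T} :
  gamma + gamma <= eps -> T <= t / 2 -> adapted dist f t gamma E P ->
  f (- (t / 2)) @^-1`
    (\bigcup_(w in cells_meeting P (f (- (t / 2)) @` ~` shadowed dist f eps C T)) w)
  `<=` ~` C.
Proof.
move=> gamma_eps Tt P_adapted z [w [Pw [p [wp [x x_free xp]]]] wz] Cz; subst p.
apply: x_free; exists z => // r rT; have [_ flowD _] := flow.
have u_range : 0 <= r + t / 2 <= t by rewrite ler_norml in rT; apply/andP; split; lra.
have := adapted_cell_close dist_metric dist_compact P_adapted Pw wp wz u_range.
by rewrite -!flowD addrK => /le_trans; apply.
Qed.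

End Shadowing.

Section ClosedRegularity.
Context {R : realType} {d : measure_display} {X : measurableType d} {dist : X -> X -> R}.
Hypothesis dist_metric : is_metric dist.
Hypothesis borel : @measurable d X = <<s [set U | dopen dist U] >>.

Lemma dopen_measurable {O} : dopen dist O -> measurable O.
Proof. by move=> O_open; rewrite borel; apply: sub_gen_smallest. Qed.

Lemma dclosed_measurable {C} : dclosed dist C -> measurable C.
Proof. by move=> C_closed; rewrite -(setCK C); apply/measurableC/dopen_measurable. Qed.

Variable mu : {finite_measure set X -> \bar R}.

Lemma nonincreasing_measure_lt (G : nat -> set X) : (forall n, measurable (G n)) ->
  (forall n m, (n <= m)%N -> G m `<=` G n) -> mu.-negligible (\bigcap_n G n) ->
  forall e : R, 0 < e -> exists n, (mu (G n) < e%:E)%E.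
Proof.
move=> mG G_dec G_null e e_gt0.
have mGI : measurable (\bigcap_n G n) by apply: bigcapT_measurable.
have G_nonincr : nonincreasing_seq G.
  by move=> n m nm; rewrite subsetEset; apply: G_dec.
have muG_nonincr : nonincreasing_seq (mu \o G).
  by move=> n m nm; apply: le_measure; rewrite ?inE //; apply: G_dec.
have G0_fin : (mu (G 0%N) < +oo)%E by rewrite ltey_eq fin_num_measure.
have inf_muG : ereal_inf ((mu \o G) @` setT) = mu (\bigcap_n G n).
  rewrite -(cvg_lim _ (ereal_nonincreasing_cvgn muG_nonincr)) //.
  exact: cvg_lim (nonincreasing_cvg_mu G0_fin mG mGI G_nonincr).
have : (ereal_inf ((mu \o G) @` setT) < e%:E)%E.
  by rewrite inf_muG (measure_negligible mGI G_null) lte_fin.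
by move=> /ereal_inf_lt[_ [n _ <-]]; exists n.
Qed.

Let inner_regular (B : set X) := forall e : R, 0 < e ->
  exists2 C, dclosed dist C & C `<=` B /\ (mu (B `\` C) < e%:E)%E.

Lemma inner_regular_dclosed C : dclosed dist C -> inner_regular C.
Proof.
by move=> C_closed e e_gt0; exists C => //; split => //; rewrite setDv measure0 lte_fin.
Qed.

Lemma inner_regularU A B : measurable A -> measurable B ->
  inner_regular A -> inner_regular B -> inner_regular (A `|` B).
Proof.
move=> mA mB rA rB e e_gt0; have e2_gt0 : 0 < e / 2 by rewrite divr_gt0.
have [C1 C1_closed [C1A muA]] := rA _ e2_gt0.
have [C2 C2_closed [C2B muB]] := rB _ e2_gt0.
have mC1 := dclosed_measurable C1_closed; have mC2 := dclosed_measurable C2_closed.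
exists (C1 `|` C2); first exact: dclosedU.
split; first exact: setUSS.
have sub : (A `|` B) `\` (C1 `|` C2) `<=` (A `\` C1) `|` (B `\` C2).
  by move=> x [[Ax|Bx] /not_orP[nC1 nC2]]; [left|right].
apply: le_lt_trans (le_measure mu _ _ sub) _; rewrite ?inE.
- by apply: measurableD; apply: measurableU.
- by apply: measurableU; apply: measurableD.
apply: le_lt_trans (measureU2 mu (measurableD mA mC1) (measurableD mB mC2)) _.
by rewrite (splitr e) EFinD; apply: lteD.
Qed.

Lemma inner_regular_bigcup (F : nat -> set X) : (forall n, measurable (F n)) ->
  (forall n, inner_regular (F n)) -> inner_regular (\bigcup_n F n).
Proof.
move=> mF rF e e_gt0; have e2_gt0 : 0 < e / 2 by rewrite divr_gt0.
pose P n := \big[setU/set0]_(i < n) F i.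
have mP n : measurable (P n) by apply: bigsetU_measurable.
have rP n : inner_regular (P n).
  elim: n => [|n IH]; first by rewrite /P big_ord0; apply: inner_regular_dclosed dclosed0.
  rewrite /P big_ord_recr /=.
  by apply: inner_regularU; [exact: mP | exact: mF | exact: IH | exact: rF].
have mU : measurable (\bigcup_n F n) by apply: bigcupT_measurable.
have [n muUP] : exists n, (mu (\bigcup_n F n `\` P n) < (e / 2)%:E)%E.
  apply: (nonincreasing_measure_lt (fun k => \bigcup_n F n `\` P k)); last exact: e2_gt0.
  - by move=> k; apply: measurableD.
  - by move=> k m km; apply: setDS; apply: subset_bigsetU.
  rewrite (_ : \bigcap_n _ = set0); first exact: negligible_set0.
  apply/seteqP; split => // x Ix; have [[i _ Fix] _] := Ix 0%N Logic.I.
  by case: (Ix i.+1 Logic.I) => _; apply; apply: bigsetU_sup Fix.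
have [C C_closed [CP muPC]] := rP n _ e2_gt0.
have mC := dclosed_measurable C_closed.
exists C => //; split; first by move=> x /CP; apply: bigsetU_bigcup.
have sub : \bigcup_n F n `\` C `<=` (\bigcup_n F n `\` P n) `|` (P n `\` C).
  by move=> x [Ux nCx]; have [Px|nPx] := pselect (P n x); [right|left].
apply: le_lt_trans (le_measure mu _ _ sub) _; rewrite ?inE.
- exact: measurableD.
- by apply: measurableU; apply: measurableD.
apply: le_lt_trans (measureU2 mu (measurableD mU (mP n)) (measurableD (mP n) mC)) _.
by rewrite (splitr e) EFinD; apply: lteD.
Qed.

Lemma inner_regular_bigcap (F : nat -> set X) : (forall n, measurable (F n)) ->
  (forall n, inner_regular (F n)) -> inner_regular (\bigcap_n F n).
Proof.
move=> mF rF e e_gt0.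
pose e_ n := e / 2 / (2 ^ n.+1)%:R.
have e_gt0' n : 0 < e_ n by rewrite !divr_gt0 // ltr0n expn_gt0.
have /choice[C hC] n : exists C,
    [/\ dclosed dist C, C `<=` F n & (mu (F n `\` C) < (e_ n)%:E)%E].
  by have [C ? []] := rF n _ (e_gt0' n); exists C.
have mC n : measurable (C n) by case: (hC n) => /dclosed_measurable.
exists (\bigcap_n C n); first by apply: dclosed_bigcap => n; case: (hC n).
split; first by move=> x Cx n _; case: (hC n) => _ CF _; apply/CF/Cx.
apply: (@le_lt_trans _ _ (\sum_(n <oo) mu (F n `\` C n))%E).
  apply: measure_sigma_subadditive.
  - by move=> n; apply: measurableD.
  - by apply: measurableD; apply: bigcapT_measurable.
  move=> x [Fx nCx]; have [i _ nCix] : (\bigcup_n ~` C n) x by rewrite -setC_bigcap.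
  by exists i => //; split => //; apply: Fx.
apply: (@le_lt_trans _ _ (\sum_(n <oo) (e_ n)%:E)%E).
  apply: lee_nneseries => n _ *; first exact: measure_ge0.
  by have [_ _ /ltW] := hC n.
apply: le_lt_trans (epsilon_trick0 _ _) _; first by rewrite divr_ge0 // ltW.
by rewrite lte_fin; lra.
Qed.

Let regular (B : set X) := [/\ measurable B, inner_regular B & inner_regular (~` B)].

Lemma regular_dopen O : dopen dist O -> regular O.
Proof.
move=> O_open; split; first exact: dopen_measurable.
- pose F n := [set x | forall z, ~ O z -> n.+1%:R^-1 <= dist x z].
  have F_closed n : dclosed dist (F n).
    move=> x /= /existsNP[z /not_implyP[nOz /negP]]; rewrite -ltNge => xz.
    exists (n.+1%:R^-1 - dist x z); first by rewrite subr_gt0.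
    move=> y /= xy Fy; have := Fy z nOz; apply/negP; rewrite -ltNge.
    apply: (le_lt_trans (dist_triangle dist_metric y x z)).
    by rewrite (distC dist_metric y x) -ltrBrDr.
  have -> : O = \bigcup_n F n.
    apply/seteqP; split => [x Ox|x [n _ Fnx]].
      have [r r_gt0 ball_O] := O_open x Ox.
      exists (Num.Def.archi_bound r^-1) => // z nOz.
      have : r <= dist x z by rewrite leNgt; apply/negP => /ball_O.
      by apply/le_trans/ltW/invr_natS_lt.
    apply: contrapT => nOx; have := Fnx x nOx; apply/negP.
    by rewrite (distxx dist_metric) -ltNge invr_gt0.
  apply: inner_regular_bigcup => n.
    exact: dclosed_measurable.
  exact: inner_regular_dclosed.
- by apply: inner_regular_dclosed; rewrite /dclosed setCK.
Qed.

Lemma regular_bigcup (F : nat -> set X) : (forall n, regular (F n)) ->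
  regular (\bigcup_n F n).
Proof.
move=> rF; have mF n : measurable (F n) by case: (rF n).
split; first exact: bigcupT_measurable.
  by apply: inner_regular_bigcup => // n; case: (rF n).
rewrite setC_bigcup; apply: inner_regular_bigcap => n; first exact: measurableC.
by case: (rF n).
Qed.

Lemma measurable_inner_regular B : measurable B -> inner_regular B.
Proof.
move=> mB; suff : regular B by case.
move: B mB; rewrite borel; apply: smallest_sub; last by move=> O; apply: regular_dopen.
split.
- by split; [exact: measurable0 | exact: inner_regular_dclosed dclosed0 |
    rewrite setC0; exact: inner_regular_dclosed dclosedT].
- move=> A [mA rA rAC]; rewrite setTD.
  by split; [exact: measurableC | exact: rAC | rewrite setCK].
- exact: regular_bigcup.
Qed.

End ClosedRegularity.

Lemma measurable_flow_preimage {R : realType} {d : measure_display} {X : measurableType d}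
    {dist : X -> X -> R} {f : R -> X -> X} :
  @measurable d X = <<s [set U | dopen dist U] >> -> is_continuous_flow dist f ->
  forall r B, measurable B -> measurable (f r @^-1` B).
Proof.
move=> borel flow r B mB.
have fr_measurable : measurable_fun setT (f r).
  apply: (measurability _ borel) => _ [V V_open <-]; rewrite setTI.
  exact/(dopen_measurable borel)/(dopen_flow_preimage flow).
by have := fr_measurable measurableT B mB; rewrite setTI.
Qed.

Lemma preimage_symdiff {T : Type} (g : T -> T) (Q W : set T) : g @^-1` Q = Q ->
  g @^-1` ((W `\` Q) `|` (Q `\` W)) = (g @^-1` W `\` Q) `|` (Q `\` g @^-1` W).
Proof. by move=> gQ; rewrite preimage_setU -[in RHS]gQ. Qed.

Lemma measure_symdiff_le {R : realType} {d : measure_display} {X : measurableType d}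
    (mu : {measure set X -> \bar R}) {Q V C G : set X} :
  measurable Q -> measurable V -> measurable C -> measurable G ->
  V `<=` ~` C -> Q `\` G `<=` V ->
  (mu ((V `\` Q) `|` (Q `\` V)) <= mu (~` Q `\` C) + mu (Q `&` G))%E.
Proof.
move=> mQ mV mC mG VC QGV.
apply: le_trans (measureU2 mu (measurableD mV mQ) (measurableD mQ mV)) _.
apply: leeD; apply: le_measure; rewrite ?inE.
- exact: measurableD.
- by apply: measurableD => //; apply: measurableC.
- by move=> x [Vx nQx]; split => //; apply: VC.
- exact: measurableD.
- exact: measurableI.
- by move=> x [Qx nVx]; split => //; apply: contrapT => nGx; apply/nVx/QGV.
Qed.

Theorem proposition3p9 (R : realType) (d : measure_display) (X : measurableType d)
  (dist : X -> X -> R)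
  (Hmetric : is_metric dist)
  (Hborel : @measurable d X = <<s [set U | dopen dist U] >>)
  (Hcompact : dcompact dist)
  (f : R -> X -> X) (Hflow : is_continuous_flow dist f)
  (mu : probability X R)
  (Hinv : forall (t : R) (A : set X), measurable A -> mu (f t @^-1` A) = mu A)
  (eps : R) (Heps : 0 < eps)
  (Hae : mu.-negligible (NE dist f eps))
  (gamma : R) (Hgamma0 : 0 < gamma) (Hgamma1 : gamma <= eps / 2)
  (E : R -> set X) (A : R -> set (set X))
  (HE : forall t : R, 0 < t -> max_separated dist f t gamma (E t))
  (HA : forall t : R, 0 < t -> adapted dist f t gamma (E t) (A t))
  (HAmeas : forall t : R, 0 < t -> forall w, A t w -> measurable w)
  (Q : set X) (HQ : measurable Q) (HQinv : forall t : R, f t @^-1` Q = Q) :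
  forall alpha : R, 0 < alpha ->
    exists2 t0 : R, 0 < t0 &
      forall t : R, t0 <= t ->
        exists2 U : set (set X), U `<=` A t &
          (mu (((\bigcup_(w in U) w) `\` Q) `|` (Q `\` \bigcup_(w in U) w)) < alpha%:E)%E.
Proof.
move=> alpha alpha_gt0; have alpha2_gt0 : 0 < alpha / 2 by rewrite divr_gt0.
have [C C_closed [CQ muQC]] :=
  measurable_inner_regular Hmetric Hborel mu _ (measurableC HQ) _ alpha2_gt0.
pose H (n : nat) := shadowed dist f eps C n%:R.
have mH n : measurable (H n).
  exact/(dclosed_measurable Hborel)/(dclosed_shadowed Hmetric Hcompact Hflow).
have [n muQH] : exists n, (mu (Q `&` H n) < (alpha / 2)%:E)%E.
  apply: (nonincreasing_measure_lt mu (fun n => Q `&` H n)); last exact: alpha2_gt0.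
  - by move=> k; apply: measurableI.
  - by move=> k m km; apply: setIS; apply: shadowed_le; rewrite ler_nat.
  - apply: negligibleS Hae.
    exact: bigcap_shadowed_sub_NE Hmetric Hcompact Hflow _ _ _ HQinv C_closed CQ.
exists (2 * n%:R + 1) => [|t t_ge]; first by rewrite ltr_pwDr // mulr_ge0.
have t_gt0 : 0 < t by apply: lt_le_trans t_ge; rewrite ltr_pwDr // mulr_ge0.
have [[_ _ A_cover] _] := HA t t_gt0.
pose U := cells_meeting (A t) (f (- (t / 2)) @` ~` H n).
have mW : measurable (\bigcup_(w in U) w).
  apply: fin_bigcup_measurable => [|w [Aw _]]; last exact: HAmeas Aw.
  apply: sub_finite_set (adapted_finite Hmetric Hcompact Hflow (HA t t_gt0) (ltW t_gt0)
    Hgamma0 (proj1 (HE t t_gt0))).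
  by move=> w [].
exists U; first by move=> w [].
rewrite -(Hinv (- (t / 2))) ?preimage_symdiff //; last first.
  by apply: measurableU; apply: measurableD.
apply: le_lt_trans (measure_symdiff_le mu HQ (measurable_flow_preimage Hborel Hflow _ _ mW)
  (dclosed_measurable Hborel C_closed) (mH n) _ _) _.
- apply: (cells_meeting_unshadowed_sub Hmetric Hcompact Hflow eps _ _ (HA t t_gt0)); lra.
- by move=> x [_ nHx]; apply: (sub_bigcup_cells_meeting _ _ A_cover); exists x.
by rewrite (splitr alpha) EFinD lteD.
Qed.
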